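(* For all integers $n\ge k\ge 2$ and $r\ge 0$, \[ \mathsf{opt}_{\operatorname{bandit}}^{\operatorname{adap}}(n,k,r)\le k\log_k n + 2kr. \]
   Context: Prediction with expert advice: $\mathcal{Y}=\{1,\dots,k\}$, $\mathcal{X}=[k]^n$, experts $h_i(x)=x_i$, $i=1,\dots,n$. $\mathcal{P}_r$ is the set of finite sequences of examples in $\mathcal{X}\times\mathcal{Y}$ on which some $h_i$ errs on at most $r$ examples. Online learning with bandit feedback: each round the adversary presents $x_t$, the learner chooses a distribution $\pi^{(t)}$ on $\mathcal{Y}$ (depending on past observations and $x_t$) and draws $\hat y_t\sim\pi^{(t)}$, and observes only whether $\hat y_t=y_t$; a mistake is $\hat y_t\ne y_t$. An adaptive adversary chooses $x_t$ from the history, sees $\pi^{(t)}$, and chooses a distribution $\tau^{(t)}$ from which $y_t$ is drawn; it must ensure that whenever the history is realizable, each $y_t$ in the support of $\tau^{(t)}$ keeps it realizable, where a history of (instance, correct/incorrect, prediction) triples is realizable if some choice of true labels agreeing with the observations gives a sequence in $\mathcal{P}_r$. $\mathsf{opt}_{\operatorname{bandit}}^{\operatorname{adap}}(n,k,r)=\inf_{\text{learner}}\sup_{\text{adversary}}$ expected number of mistakes. *)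

From HB Require Import structures.
From mathcomp Require Import all_boot all_order all_algebra.
From mathcomp Require Import all_classical all_reals.
From mathcomp Require Import ereal exp.
Set Implicit Arguments. Unset Strict Implicit. Unset Printing Implicit Defensive.
Import Order.TTheory GRing.Theory Num.Theory.
Local Open Scope ring_scope.

Section BanditGame.
Variables (R : realType) (n k r : nat).

(* instance space X = [k]^n ; labels Y = 'I_k (i.e. {1..k} shifted to {0..k-1}) *)
Definition inst := {ffun 'I_n -> 'I_k}.
Definition expert (i : 'I_n) (x : inst) : 'I_k := x i.

Definition dist := {ffun 'I_k -> R}.
Definition is_dist (p : dist) : Prop := (forall y, 0 <= p y) /\ \sum_y p y = 1.

Definition in_Pr (z : seq (inst * 'I_k)) : Prop :=
  exists i : 'I_n, (count (fun e => expert i e.1 != e.2) z <= r)%N.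

(* learner's observation: (instance, correct?, prediction) *)
Definition obs := (inst * bool * 'I_k)%type.

Definition realizable (s : seq obs) : Prop :=
  exists ys : seq 'I_k,
    size ys = size s /\
    all2 (fun o y => o.1.2 == (o.2 == y)) s ys /\
    in_Pr (zip [seq o.1.1 | o <- s] ys).

Definition learner := seq obs -> inst -> dist.
Definition valid_learner (L : learner) : Prop :=
  forall s x, is_dist (L s x).

(* full history seen by the adaptive adversary: (x_t, pi_t, yhat_t, y_t) *)
Definition ahist := seq (inst * dist * 'I_k * 'I_k).
Definition obs_of (h : ahist) : seq obs :=
  [seq (e.1.1.1, e.1.2 == e.2, e.1.2) | e <- h].

(* adaptive adversary: chooses x_t from the history, then (after seeing
   pi_t) a distribution tau_t of y_t *)
Record adversary := Adversary {
  adv_x : ahist -> inst;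
  adv_tau : ahist -> inst -> dist -> dist }.

Definition valid_adversary (A : adversary) : Prop :=
  forall (h : ahist) (x : inst) (pi : dist), is_dist pi ->
    is_dist (adv_tau A h x pi) /\
    (realizable (obs_of h) ->
       forall y yhat : 'I_k, 0 < adv_tau A h x pi y -> 0 < pi yhat ->
         realizable (rcons (obs_of h) (x, yhat == y, yhat))).

Fixpoint exp_mistakes (L : learner) (A : adversary) (T : nat) (h : ahist) : R :=
  match T with
  | 0 => 0
  | T'.+1 =>
      let x := adv_x A h in
      let pi := L (obs_of h) x in
      let tau := adv_tau A h x pi in
      \sum_(yhat : 'I_k) \sum_(y : 'I_k)
         pi yhat * tau y *
         (((yhat != y) : nat)%:R + exp_mistakes L A T' (rcons h (x, pi, yhat, y)))
  end.

(* opt^adap_bandit(n,k,r) = inf_learner sup_adversary E[#mistakes]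
   (the game may last any finite number of rounds T) *)
Definition opt_bandit_adap : \bar R :=
  ereal_inf [set ereal_sup [set e | exists (A : adversary) (T : nat),
                                valid_adversary A /\ e = (exp_mistakes L A T [::])%:E]
            | L in valid_learner].

End BanditGame.

From HB Require Import structures.
From mathcomp Require Import all_boot all_order all_algebra.
From mathcomp Require Import all_classical all_reals.
From mathcomp Require Import ereal exp.
From mathcomp Require Import lra ring.
Set Implicit Arguments. Unset Strict Implicit. Unset Printing Implicit Defensive.
Import Order.TTheory GRing.Theory Num.Theory.
Local Open Scope ring_scope.

(* Exponential weights driven only by what the bandit feedback certifies.
   Expert i has weight k^(-2 m_i), where m_i counts the observed rounds that
   refute it for sure (a correct guess different from x_i, or a wrong guess
   equal to x_i), and Phi = (k / ln k) ln W + 2kr with W the total weight.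
   Phi starts at k log_k n + 2kr and stays nonnegative on realizable
   histories, because some expert has m_i <= r, so W >= k^(-2r).  In every
   round some prediction distribution makes, for each possible true label,
   the expected mistake plus the expected change of Phi nonpositive: a point
   mass on a label holding a large share of the weight, or else
   probabilities inversely proportional to the cost of the guesses.  Hence
   the expected number of mistakes never exceeds the initial value of Phi. *)

Lemma ln_le_subr1 (R : realType) (x : R) : 0 < x -> ln x <= x - 1.
Proof.
move=> x_gt0; have := @le_ln1Dx _ (x - 1); rewrite addrCA subrr addr0.
apply; lra.
Qed.

Section MixedPrediction.
Variables (R : realFieldType) (k : nat) (A V : 'I_k -> R).

Definition round_cost (yhat y : 'I_k) : R := if yhat == y then - V y else A yhat.

Hypothesis V_ge0 : forall j, 0 <= V j.
Hypothesis kA_le_V : forall j, k%:R * A j <= V j.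

Lemma point_mass_round_cost_le0 j0 : A j0 <= 0 ->
  exists pi : {ffun 'I_k -> R}, ((forall y, 0 <= pi y) /\ \sum_y pi y = 1) /\
    forall y, \sum_yhat pi yhat * round_cost yhat y <= 0.
Proof.
move=> Aj0; pose pi := [ffun j => (j == j0)%:R : R].
have sum_pi F : \sum_j pi j * F j = F j0.
  rewrite (bigD1 j0) //= big1 => [|j /negbTE nj]; last by rewrite ffunE nj mul0r.
  by rewrite ffunE eqxx mul1r addr0.
exists pi; split.
  split=> [y|]; first by rewrite ffunE ler0n.
  by rewrite -[RHS](sum_pi (fun=> 1)); apply: eq_bigr => j _; rewrite mulr1.
move=> y; rewrite sum_pi /round_cost.
by case: eqP => [<-|_]; rewrite ?oppr_le0.
Qed.

Lemma inverse_weighted_round_cost_le0 : (0 < k)%N -> (forall j, 0 < A j) ->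
  exists pi : {ffun 'I_k -> R}, ((forall y, 0 <= pi y) /\ \sum_y pi y = 1) /\
    forall y, \sum_yhat pi yhat * round_cost yhat y <= 0.
Proof.
move=> k_gt0 A_gt0.
have k_pos : 0 < k%:R :> R by rewrite ltr0n.
pose D j := A j + V j.
have kA_le_D j : k%:R * A j <= D j by rewrite /D; have := kA_le_V j; have := A_gt0 j; lra.
have D_gt0 j : 0 < D j by have := kA_le_D j; have := A_gt0 j; nra.
pose Z := \sum_j (D j)^-1.
have Z_gt0 : 0 < Z.
  rewrite /Z (bigD1 (Ordinal k_gt0)) //= ltr_pwDl ?invr_gt0 //.
  by apply: sumr_ge0 => j _; rewrite invr_ge0 ltW.
pose pi := [ffun j => (D j)^-1 / Z].
have pi_ge0 j : 0 <= pi j by rewrite ffunE divr_ge0 ?invr_ge0 ?ltW.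
(* inverse weights equalise [pi j * D j], which is what the cost of a correct guess subtracts *)
have piD j : pi j * D j = Z^-1 by rewrite ffunE mulrAC mulVf ?mul1r // gt_eqF.
have piA j : pi j * A j <= Z^-1 / k%:R.
  rewrite -(piD j) ler_pdivlMr // -mulrA ler_wpM2l //.
  by rewrite mulrC.
exists pi; split.
  split=> //; under eq_bigr do rewrite ffunE.
  by rewrite -mulr_suml divff // gt_eqF.
move=> y.
have cost_split : \sum_yhat pi yhat * round_cost yhat y
    = \sum_yhat pi yhat * A yhat - pi y * D y.
  rewrite (bigD1 y) //= [X in _ = X - _](bigD1 y) //= /round_cost eqxx.
  rewrite (eq_bigr (fun j => pi j * A j)) => [|j /negbTE -> //].
  rewrite /D; ring.
rewrite cost_split piD subr_le0.
apply: le_trans (ler_sum _ (fun j _ => piA j)) _.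
suff -> : \sum_(j < k) Z^-1 / k%:R = Z^-1 by [].
by rewrite sumr_const card_ord; field; rewrite !gt_eqF.
Qed.

Lemma exists_dist_round_cost_le0 : (0 < k)%N ->
  exists pi : {ffun 'I_k -> R}, ((forall y, 0 <= pi y) /\ \sum_y pi y = 1) /\
    forall y, \sum_yhat pi yhat * round_cost yhat y <= 0.
Proof.
move=> k_gt0; have [[j0 Aj0]|A_gt0] := pselect (exists j, ~~ (0 < A j)).
  by apply: (@point_mass_round_cost_le0 j0); rewrite leNgt.
by apply: inverse_weighted_round_cost_le0 => // j; apply: contra_notT A_gt0 => ?; exists j.
Qed.

End MixedPrediction.

Section ExponentialWeights.
Variables (R : realType) (k : nat).
Hypothesis k_ge2 : (2 <= k)%N.

Definition decay : R := (k%:R ^+ 2)^-1.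
Definition rate : R := k%:R / ln k%:R.

Lemma k_gt1 : 1 < k%:R :> R.
Proof. by rewrite ltr1n. Qed.

Lemma rate_gt0 : 0 < rate.
Proof. by rewrite divr_gt0 ?ln_gt0 ?k_gt1 // (lt_trans _ k_gt1). Qed.

Lemma rate_ln : rate * ln k%:R = k%:R.
Proof. by rewrite mulfVK // gt_eqF // ln_gt0 ?k_gt1. Qed.

Lemma decay_gt0 : 0 < decay.
Proof. by rewrite invr_gt0 exprn_gt0 // (lt_trans _ k_gt1). Qed.

Lemma k_decay : k%:R * decay = k%:R^-1.
Proof. by rewrite /decay expr2 invfM mulVKf // gt_eqF // (lt_trans _ k_gt1). Qed.

Lemma k_decay_le1 : k%:R * decay <= 1.
Proof. by rewrite k_decay invf_le1 ?ltW ?k_gt1 // (lt_trans _ k_gt1). Qed.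

Lemma decay_le1 : decay <= 1.
Proof. by have := k_decay_le1; have := decay_gt0; have := k_gt1; nra. Qed.

Section Fractions.
Variable p : 'I_k -> R.
Hypothesis p01 : forall j, 0 <= p j <= 1.

Definition weight_ratio (yhat y : 'I_k) : R :=
  if yhat == y then decay + (1 - decay) * p y else 1 - (1 - decay) * p yhat.

Definition wrong_bound j : R := 1 - rate * (1 - decay) * p j.
Definition right_gain j : R := - (rate * ln (decay + (1 - decay) * p j)).

Lemma weight_ratio_gt0 yhat y : 0 < weight_ratio yhat y.
Proof.
have := decay_gt0; have := decay_le1.
rewrite /weight_ratio; case: eqP => _.
  by have /andP[] := p01 y; nra.
by have /andP[] := p01 yhat; nra.
Qed.

Lemma right_gain_ge0 j : 0 <= right_gain j.
Proof.
rewrite /right_gain oppr_ge0 pmulr_rle0 ?rate_gt0 // ln_le0 //.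
by have := decay_le1; have /andP[] := p01 j; nra.
Qed.

(* [ln (k q) <= k q - 1] at the weight fraction [q] kept by a correct guess *)
Lemma k_wrong_bound_le_right_gain j : k%:R * wrong_bound j <= right_gain j.
Proof.
have [b_gt0 b_le1 c_gt0] := And3 decay_gt0 decay_le1 rate_gt0.
have /andP[p0 p1] := p01 j.
have q_gt0 : 0 < decay + (1 - decay) * p j by nra.
have k_gt0 : 0 < k%:R :> R by rewrite (lt_trans _ k_gt1).
have := ln_le_subr1 (mulr_gt0 k_gt0 q_gt0); rewrite lnM ?posrE // => hln.
have := ler_wpM2l (ltW c_gt0) hln; rewrite mulrDr rate_ln => {}hln.
have := ler_wpM2l (ltW c_gt0) k_decay_le1.
rewrite /wrong_bound /right_gain; lra.
Qed.

Lemma round_loss_le_round_cost yhat y :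
  ((yhat != y) : nat)%:R + rate * ln (weight_ratio yhat y)
    <= round_cost wrong_bound right_gain yhat y.
Proof.
have [<-|ne] := eqVneq yhat y.
  by rewrite /round_cost /right_gain /weight_ratio !eqxx add0r opprK.
have := ler_wpM2l (ltW rate_gt0) (ln_le_subr1 (weight_ratio_gt0 yhat y)).
rewrite /round_cost /weight_ratio /wrong_bound (negbTE ne) /=; lra.
Qed.

Lemma exists_dist_round_loss_le0 :
  exists pi : {ffun 'I_k -> R}, ((forall y, 0 <= pi y) /\ \sum_y pi y = 1) /\
    forall y, \sum_yhat pi yhat *
      (((yhat != y) : nat)%:R + rate * ln (weight_ratio yhat y)) <= 0.
Proof.
have [|pi [pi_dist pi_cost]] := exists_dist_round_cost_le0 right_gain_ge0
  k_wrong_bound_le_right_gain; first exact: leq_trans k_ge2.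
exists pi; split=> // y; apply: le_trans (pi_cost y).
apply: ler_sum => yhat _; apply: ler_wpM2l; first exact: pi_dist.1.
exact: round_loss_le_round_cost.
Qed.

End Fractions.
End ExponentialWeights.

Section PotentialBound.
Variables (R : realType) (n k r : nat) (Phi : seq (obs n k) -> R) (L : learner R n k).
Hypothesis L_valid : valid_learner L.
Hypothesis L_descent : forall s x y,
  \sum_yhat L s x yhat * (((yhat != y) : nat)%:R + Phi (rcons s (x, yhat == y, yhat)))
    <= Phi s.
Hypothesis Phi_ge0 : forall s, realizable r s -> 0 <= Phi s.

Lemma exp_mistakes_le_potential (A : adversary R n k) T h :
  valid_adversary r A -> realizable r (obs_of h) -> exp_mistakes L A T h <= Phi (obs_of h).
Proof.
move=> A_valid; elim: T h => [|T IH] h h_real /=; first exact: Phi_ge0.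
set x := adv_x A h; set pi := L (obs_of h) x; set tau := adv_tau A h x pi.
have pi_dist := L_valid (obs_of h) x.
have [tau_dist tau_real] := A_valid h x pi pi_dist.
have obs_rcons yhat y : obs_of (rcons h (x, pi, yhat, y)) = rcons (obs_of h) (x, yhat == y, yhat).
  by rewrite /obs_of map_rcons.
pose next yhat y := ((yhat != y) : nat)%:R + Phi (rcons (obs_of h) (x, yhat == y, yhat)).
apply: (@le_trans _ _ (\sum_y tau y * \sum_yhat pi yhat * next yhat y)); last first.
  apply: (@le_trans _ _ (\sum_y tau y * Phi (obs_of h))).
    by apply: ler_sum => y _; rewrite ler_wpM2l ?tau_dist.1 ?L_descent.
  by rewrite -mulr_suml tau_dist.2 mul1r.
rewrite exchange_big /=; apply: ler_sum => y _; rewrite mulr_sumr.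
apply: ler_sum => yhat _; rewrite mulrCA mulrA.
have [->|pi_neq0] := eqVneq (pi yhat) 0; first by rewrite !mul0r.
have [->|tau_neq0] := eqVneq (tau y) 0; first by rewrite mulr0 !mul0r.
(* only outcomes of positive probability occur, and those keep the history realizable *)
rewrite ler_wpM2l ?mulr_ge0 ?pi_dist.1 ?tau_dist.1 // lerD2l -obs_rcons.
apply: IH; rewrite obs_rcons; apply: tau_real => //.
  by rewrite lt0r tau_neq0 tau_dist.1.
by rewrite lt0r pi_neq0 pi_dist.1.
Qed.

End PotentialBound.

Lemma opt_bandit_adap_le (R : realType) (n k r : nat) (L : learner R n k) (b : R) :
  valid_learner L -> (forall A T, valid_adversary r A -> exp_mistakes L A T [::] <= b) ->
  (opt_bandit_adap R n k r <= b%:E)%E.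
Proof.
move=> L_valid L_bound; apply: ge_ereal_inf; exists (ereal_sup
  [set e | exists A T, valid_adversary r A /\ e = (exp_mistakes L A T [::])%:E]).
  by exists L.
by apply: ge_ereal_sup => _ [A [T [A_valid ->]]]; rewrite lee_fin L_bound.
Qed.

Section ExpertWeights.
Variables (R : realType) (n k r : nat).
Hypotheses (k_ge2 : (2 <= k)%N) (n_gt0 : (0 < n)%N).

Local Notation beta := (decay R k).
Local Notation c := (rate R k).

Definition contradicts (i : 'I_n) (o : obs n k) : bool :=
  if o.1.2 then o.1.1 i != o.2 else o.1.1 i == o.2.

Lemma realizable_contradictions s :
  realizable r s -> exists i, (count (contradicts i) s <= r)%N.
Proof.
move=> [ys [size_ys [ys_obs [i i_errs]]]]; exists i; apply: leq_trans i_errs.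
elim: s ys size_ys ys_obs => [|[[x b] yhat] s IH] [|y ys] //= [size_ys] /andP[/eqP-> ys_obs].
apply: leq_add; last exact: IH.
rewrite /contradicts /expert /=.
by have [<-|ne] := eqVneq yhat y; [|case: eqP => [->|]]; rewrite ?eqxx ?ne.
Qed.

Definition weight (s : seq (obs n k)) (i : 'I_n) : R := beta ^+ count (contradicts i) s.
Definition total_weight s : R := \sum_i weight s i.
Definition potential s : R := c * ln (total_weight s) + 2 * k%:R * r%:R.

Lemma weight_gt0 s i : 0 < weight s i.
Proof. by rewrite exprn_gt0 ?decay_gt0. Qed.

Lemma sum_weight_ge0 s (P : pred 'I_n) : 0 <= \sum_(i | P i) weight s i.
Proof. by apply: sumr_ge0 => i _; rewrite ltW ?weight_gt0. Qed.

Lemma total_weight_gt0 s : 0 < total_weight s.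
Proof. by rewrite /total_weight (bigD1 (Ordinal n_gt0)) //= ltr_pwDl ?weight_gt0 ?sum_weight_ge0. Qed.

Lemma total_weight_rcons s o :
  total_weight (rcons s o) = total_weight s - (1 - beta) * \sum_(i | contradicts i o) weight s i.
Proof.
have weight_rcons i : weight (rcons s o) i = weight s i * (if contradicts i o then beta else 1).
  by rewrite /weight -cats1 count_cat /= addn0 exprD; case: contradicts.
rewrite /total_weight (eq_bigr _ (fun i _ => weight_rcons i)).
rewrite (bigID (contradicts ^~ o)) [X in _ = X - _](bigID (contradicts ^~ o)) /=.
rewrite (eq_bigr (fun i => weight s i * beta)) => [|i ->] //.
rewrite [X in _ + X](eq_bigr (weight s)) => [|i /negbTE ->]; last exact: mulr1.
rewrite -mulr_suml; ring.
Qed.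

Definition label_fraction s (x : inst n k) (j : 'I_k) : R :=
  (\sum_(i | x i == j) weight s i) / total_weight s.

Lemma label_fraction01 s x j : 0 <= label_fraction s x j <= 1.
Proof.
have W_gt0 := total_weight_gt0 s.
rewrite /label_fraction divr_ge0 ?sum_weight_ge0 ?(ltW W_gt0) //= ler_pdivrMr // mul1r.
by rewrite /total_weight [leRHS](bigID (fun i => x i == j)) lerDl sum_weight_ge0.
Qed.

Lemma total_weight_guess s x yhat y :
  total_weight (rcons s (x, yhat == y, yhat))
    = total_weight s * weight_ratio (label_fraction s x) yhat y.
Proof.
have W_neq0 : total_weight s != 0 by rewrite gt_eqF ?total_weight_gt0.
rewrite total_weight_rcons /weight_ratio /label_fraction /contradicts /=.
have [<-|ne] := eqVneq yhat y; last by field.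
have -> : \sum_(i | x i != yhat) weight s i
    = total_weight s - \sum_(i | x i == yhat) weight s i.
  by rewrite /total_weight [in RHS](bigID (fun i => x i == yhat)) /= addrAC subrr add0r.
by field.
Qed.

Lemma potential_guess s x yhat y :
  potential (rcons s (x, yhat == y, yhat))
    = potential s + c * ln (weight_ratio (label_fraction s x) yhat y).
Proof.
rewrite /potential total_weight_guess lnM ?posrE ?total_weight_gt0 //; first ring.
apply: (weight_ratio_gt0 k_ge2) => j.
exact: label_fraction01.
Qed.

Lemma potential_step s x : exists pi : dist R k, is_dist pi /\ forall y,
  \sum_yhat pi yhat * (((yhat != y) : nat)%:R + potential (rcons s (x, yhat == y, yhat)))
    <= potential s.
Proof.
have [pi [pi_dist pi_loss]] := exists_dist_round_loss_le0 k_ge2 (label_fraction01 s x).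
exists pi; split=> // y; under eq_bigr do rewrite potential_guess.
pose loss yhat := ((yhat != y) : nat)%:R + c * ln (weight_ratio (label_fraction s x) yhat y).
have sum_pi_potential : \sum_yhat pi yhat * potential s = potential s.
  by rewrite -mulr_suml pi_dist.2 mul1r.
rewrite (_ : \sum_yhat _ = \sum_yhat pi yhat * loss yhat + potential s) ?gerDr ?pi_loss //.
rewrite -[in RHS]sum_pi_potential -big_split /=.
by apply: eq_bigr => yhat _; rewrite /loss; ring.
Qed.

Lemma potential_ge0 s : realizable r s -> 0 <= potential s.
Proof.
move=> /realizable_contradictions [i i_count].
have [b_gt0 b_le1] := (decay_gt0 R k_ge2, decay_le1 R k_ge2).
have W_ge : beta ^+ r <= total_weight s.
  apply: (@le_trans _ _ (weight s i)); first exact: ler_wiXn2l (ltW b_gt0) b_le1 _ _ i_count.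
  by rewrite /total_weight (bigD1 i) //= lerDl sum_weight_ge0.
have ln_beta_r : c * ln (beta ^+ r) = - (2 * k%:R * r%:R).
  rewrite lnXn // lnV ?posrE ?exprn_gt0 ?(lt_trans _ (k_gt1 R k_ge2)) //.
  rewrite lnXn ?(lt_trans _ (k_gt1 R k_ge2)) // !(mulrnAr, mulrN) rate_ln //.
  ring.
have ln_W_ge : ln (beta ^+ r) <= ln (total_weight s).
  by rewrite ler_ln ?posrE ?exprn_gt0 ?total_weight_gt0.
have := ler_wpM2l (ltW (rate_gt0 R k_ge2)) ln_W_ge.
by rewrite ln_beta_r /potential; lra.
Qed.

Lemma potential_nil : potential [::] = k%:R * (ln n%:R / ln k%:R) + 2 * k%:R * r%:R.
Proof.
rewrite /potential /total_weight /weight /=.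
by under eq_bigr do rewrite expr0; rewrite sumr_const card_ord mulrAC -mulrA.
Qed.

Definition potential_learner : learner R n k :=
  fun s x => projT1 (cid (potential_step s x)).

Lemma potential_learner_step s x : is_dist (potential_learner s x) /\ forall y,
  \sum_yhat potential_learner s x yhat *
    (((yhat != y) : nat)%:R + potential (rcons s (x, yhat == y, yhat))) <= potential s.
Proof. exact: projT2 (cid (potential_step s x)). Qed.

Lemma potential_learner_valid : valid_learner potential_learner.
Proof. by move=> s x; case: (potential_learner_step s x). Qed.

Lemma potential_learner_mistakes A T :
  valid_adversary r A -> exp_mistakes potential_learner A T [::] <= potential [::].
Proof.
move=> A_valid; apply: (@exp_mistakes_le_potential R n k r potential) => //.
- exact: potential_learner_valid.
- by move=> s x; case: (potential_learner_step s x).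
- exact: potential_ge0.
- by exists [::]; do 2!split=> //; exists (Ordinal n_gt0).
Qed.

End ExpertWeights.

Theorem theorem4p7 (R : realType) (n k r : nat) :
  (2 <= k)%N -> (k <= n)%N ->
  (opt_bandit_adap R n k r <=
     ((k%:R * (ln (n%:R : R) / ln (k%:R : R)) + 2 * k%:R * r%:R)%:E))%E.
Proof.
move=> k_ge2 k_le_n; have n_gt0 : (0 < n)%N by rewrite (leq_trans _ k_le_n) // ltnW.
rewrite -(potential_nil R n k r).
apply: (opt_bandit_adap_le (potential_learner_valid R r k_ge2 n_gt0)) => A T.
exact: potential_learner_mistakes.
Qed.
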